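(* Let $K$ be an oriented Legendrian knot and $(X,\ast,u,d)$ a finite block GL-rack, with blocks $A_1,\dots,A_n$ each of size $c$, induced GL-quandle $(\widetilde X,\tilde\ast,\tilde u,\tilde d)$ and projection $\pi\colon X\to\widetilde X$. If $\phi\in\operatorname{Hom}(\operatorname{GLR}(K),X)$ then $\pi\circ\phi\in\operatorname{Hom}(\operatorname{GLR}(K),\widetilde X)$. Furthermore, $$\operatorname{Col}_X(K)=\sum_{\psi\in\operatorname{Hom}(\operatorname{GLR}(K),\widetilde X)}|\operatorname{Lift}(\psi)|,$$ and for every such $\psi$, $|\operatorname{Lift}(\psi)|\in\{0,c\}$.
   Context: A rack is a set $X$ with a binary operation $\ast$ such that for every $y\in X$ the map $x\mapsto x\ast y$ is a bijection of $X$ and $(x\ast y)\ast z=(x\ast z)\ast(y\ast z)$ for all $x,y,z$. A GL-rack is a quadruple $(X,\ast,u,d)$ where $(X,\ast)$ is a rack and $u,d\colon X\to X$ are maps such that for all $x,y\in X$: $u(d(x\ast x))=d(u(x\ast x))=x$; $u(x\ast y)=u(x)\ast y$ and $d(x\ast y)=d(x)\ast y$; $x\ast u(y)=x\ast d(y)=x\ast y$. A GL-quandle is a GL-rack with $x\ast x=x$. Homomorphisms of GL-racks are maps preserving $\ast$, $u$, $d$. The diagonal map is $\Delta(x)=x\ast x$; for finite $X$ it is a bijection with $\Delta=(u\circ d)^{-1}$. A finite GL-rack is a block GL-rack if all cycles in the disjoint cycle decomposition $\Delta=\alpha_1\cdots\alpha_n$ (fixed points counted as $1$-cycles) have the same length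 $c$; the blocks are $A_i=\operatorname{supp}(\alpha_i)$. The induced GL-quandle is $\widetilde X=\{a_1,\dots,a_n\}$ with $\pi(A_i)=\{a_i\}$, $a_i\tilde\ast a_j=\pi(A_i\ast A_j)$, $\tilde u(a_i)=\pi(u(A_i))$, $\tilde d(a_i)=\pi(d(A_i))$ (these are well defined, each image being a single block). For $\psi\in\operatorname{Hom}(\operatorname{GLR}(K),\widetilde X)$, $\operatorname{Lift}(\psi)=\{\phi\in\operatorname{Hom}(\operatorname{GLR}(K),X):\pi\circ\phi=\psi\}$. Legendrian knots in $(\mathbb{R}^3,\xi_{\mathrm{std}})$ are represented by oriented front diagrams. The fundamental GL-rack $\operatorname{GLR}(K)$ is the GL-rack generated by the arcs of a front diagram $D$ of $K$ subject to: following the orientation through a cusp, the generator changes by $u$ (cusp traversed upward) or $d$ (traversed downward); at a crossing with over-arc $y$, the under-arc $x$ on the right of the oriented over-strand and the under-arc $z$ on its left satisfy $z=x\ast y$. For a finite GL-rack $Y$, $\operatorname{Col}_Y(K)=|\operatorname{Hom}(\operatorname{GLR}(K),Y)|$, the number of colorings of $D$ by $Y$ obeying these rules; it is a Legendrian isotopy invariant. *)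

From mathcomp Require Import all_boot.
Set Implicit Arguments.
Unset Strict Implicit.
Unset Printing Implicit Defensive.

Section GLRack.
Variable X : finType.
Variables (op : X -> X -> X) (u d : X -> X).

Definition is_rack : Prop :=
  (forall y, bijective (fun x => op x y)) /\
  (forall x y z, op (op x y) z = op (op x z) (op y z)).

Definition is_GLrack : Prop :=
  is_rack /\
  (forall x, u (d (op x x)) = x /\ d (u (op x x)) = x) /\
  (forall x y, u (op x y) = op (u x) y /\ d (op x y) = op (d x) y) /\
  (forall x y, op x (u y) = op x y /\ op x (d y) = op x y).

Definition Delta (x : X) : X := op x x.

Definition is_block (c : nat) : Prop := forall x, order Delta x = c.

Definition block (x : X) : {set X} := [set y | fconnect Delta x y].

Definition tX := {A : {set X} | [exists x, A == block x]}.

Lemma tX_rep_ex (A : tX) : exists x, val A == block x.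
Proof. exact: (existsP (valP A)). Qed.

Definition rep (A : tX) : X := xchoose (tX_rep_ex A).

Definition bpi (x : X) : tX :=
  exist _ (block x) (introT existsP (ex_intro _ x (eqxx (block x)))).

Definition top (A B : tX) : tX := bpi (op (rep A) (rep B)).
Definition tu (A : tX) : tX := bpi (u (rep A)).
Definition td (A : tX) : tX := bpi (d (rep A)).
End GLRack.

(* Arcs are numbered 0..n-1 in the order met when following the orientation;
   between arc k and arc k+1 (mod n) there is a transition: a cusp traversed
   upward, a cusp traversed downward, or passing under a crossing whose
   over-arc is o, going from the right side of the oriented over-strand to its
   left side (b = true) or from left to right (b = false). *)
Inductive transition (n : nat) :=
  | TUp
  | TDown
  | TUnder of 'I_n & bool.

Record front := Front {
  narcs : nat;
  narcs_pos : 0 < narcs;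
  ftr : 'I_narcs -> transition narcs }.

Section Colorings.
Variable D : front.
Variable Y : finType.
Variables (op : Y -> Y -> Y) (u d : Y -> Y).

Definition coloring_at (col : {ffun 'I_(narcs D) -> Y}) (k : 'I_(narcs D)) : bool :=
  let nxt := col (ordS k) in
  match ftr k with
  | TUp => nxt == u (col k)
  | TDown => nxt == d (col k)
  | TUnder o true => nxt == op (col k) (col o)
  | TUnder o false => col k == op nxt (col o)
  end.

(* Hom(GLR(K), Y), identified with the colorings of the diagram *)
Definition Hom : {set {ffun 'I_(narcs D) -> Y}} :=
  [set col | [forall k, coloring_at col k]].

Definition Col : nat := #|Hom|.
End Colorings.

Definition Lift (D : front) (X : finType) (op : X -> X -> X) (u d : X -> X)
  (psi : {ffun 'I_(narcs D) -> tX op}) : {set {ffun 'I_(narcs D) -> X}} :=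
  [set phi in Hom D op u d | [ffun k => bpi op (phi k)] == psi].
Arguments Lift D [X] op u d psi.
Arguments bpi [X] op x.
Arguments top [X] op A B.
Arguments tu [X] op u A.
Arguments td [X] op d A.
Arguments rep [X] op A.
Arguments tX [X] op.

From mathcomp Require Import all_boot.
Set Implicit Arguments.
Unset Strict Implicit.
Unset Printing Implicit Defensive.

(* Self-distributivity makes the diagonal map Delta commute with the rack
   operation, and right-invertibility gives x * Delta y = x * y; with the GL
   axioms Delta also commutes with u and d. Hence every iterate of Delta is an
   endomorphism of X, and the block projection pi is a homomorphism onto the
   induced quandle: the image of a coloring is a coloring. Along the diagram a
   coloring is determined by the color of one arc, because the rack action is
   invertible and an over-arc acts only through its block. So the lifts of a
   coloring psi of the quandle, if any, are the Delta-iterates of one of them,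
   in bijection with the Delta-orbit of a single color: a block, of size c. *)

Definition GLmorphism (X Y : Type) (opX : X -> X -> X) (uX dX : X -> X)
  (opY : Y -> Y -> Y) (uY dY : Y -> Y) (f : X -> Y) : Prop :=
  [/\ {morph f : a b / opX a b >-> opY a b},
      {morph f : a / uX a >-> uY a} & {morph f : a / dX a >-> dY a}].

Lemma iter_morph (T : Type) (f g : T -> T) k :
  {morph f : x / g x} -> {morph iter k f : x / g x}.
Proof. by move=> fg x; elim: k => //= k ->. Qed.

Section Rack.
Variables (X : finType) (op : X -> X -> X).
Hypothesis rackX : is_rack op.
Local Notation Delta := (Delta op).

Lemma op_injl y : injective (op^~ y).
Proof. exact: bij_inj (rackX.1 y). Qed.

Lemma op_Delta x y : op x (Delta y) = op x y.
Proof.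
have [g _ gK] := rackX.1 y.
by rewrite -[x in RHS](gK x) -[x in LHS](gK x) /Delta -rackX.2.
Qed.

Lemma op_iter_Delta x y k : op x (iter k Delta y) = op x y.
Proof. by elim: k => //= k IH; rewrite op_Delta IH. Qed.

Lemma Delta_opl a b : op (Delta a) b = Delta (op a b).
Proof. by rewrite /Delta rackX.2. Qed.

Lemma iter_Delta_op k : {morph iter k Delta : a b / op a b}.
Proof. by move=> a b; elim: k => //= k ->; rewrite -Delta_opl op_Delta. Qed.

End Rack.

Section GLRack.
Variables (X : finType) (op : X -> X -> X) (u d : X -> X).
Hypothesis GLX : is_GLrack op u d.
Local Notation Delta := (Delta op).
Local Notation bpi := (bpi op).

Lemma Delta_inj : injective Delta.
Proof. by apply: (can_inj (g := u \o d)) => x; case: (GLX.2.1 x). Qed.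

Lemma Delta_u : {morph Delta : a / u a}.
Proof. by move=> a; rewrite /Delta (GLX.2.2.2 _ _).1 (GLX.2.2.1 _ _).1. Qed.

Lemma Delta_d : {morph Delta : a / d a}.
Proof. by move=> a; rewrite /Delta (GLX.2.2.2 _ _).2 (GLX.2.2.1 _ _).2. Qed.

Lemma iter_Delta_GLmorphism k : GLmorphism op u d op u d (iter k Delta).
Proof.
split; [exact: (iter_Delta_op GLX.1) | exact: iter_morph Delta_u |
        exact: iter_morph Delta_d].
Qed.

Lemma bpiP a b : bpi a = bpi b <-> fconnect Delta a b.
Proof.
split=> [/(congr1 val) /= Eab | ab].
  have : b \in block op b by rewrite inE connect0.
  by rewrite -Eab inE.
apply: val_inj; apply/setP => z; rewrite !inE.
apply/idP/idP; last exact: connect_trans.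
by apply: connect_trans; rewrite (fconnect_sym Delta_inj).
Qed.

Lemma bpi_iter k a : bpi (iter k Delta a) = bpi a.
Proof. by apply/bpiP; rewrite (fconnect_sym Delta_inj) fconnect_iter. Qed.

Lemma repK : cancel (rep op) bpi.
Proof. by move=> A; apply/val_inj/esym/eqP/(xchooseP (tX_rep_ex A)). Qed.

Lemma bpi_eq_iter a b : bpi a = bpi b -> b = iter (findex Delta a b) Delta a.
Proof. by move/bpiP/iter_findex. Qed.

Lemma op_bpi_eq x a b : bpi a = bpi b -> op x a = op x b.
Proof. by move/bpi_eq_iter ->; rewrite (op_iter_Delta GLX.1). Qed.

Lemma bpi_congr (f : X -> X) a a' : bpi a = bpi a' ->
  (forall k, {morph iter k Delta : x / f x}) -> bpi (f a) = bpi (f a').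
Proof. by move/bpi_eq_iter -> => fD; rewrite -fD bpi_iter. Qed.

Lemma bpi_GLmorphism : GLmorphism op u d (top op) (tu op u) (td op d) bpi.
Proof.
split=> [a b | a | a]; rewrite /top /tu /td.
- rewrite (op_bpi_eq _ (repK (bpi b))).
  have opbD k : {morph iter k Delta : x / op x b}.
    by move=> x; rewrite (iter_Delta_op GLX.1) (op_iter_Delta GLX.1).
  exact: bpi_congr (esym (repK _)) opbD.
- exact: bpi_congr (esym (repK _)) (fun k => iter_morph k Delta_u).
- exact: bpi_congr (esym (repK _)) (fun k => iter_morph k Delta_d).
Qed.

Lemma card_block x : #|block op x| = order Delta x.
Proof. exact: cardsE. Qed.

End GLRack.

Definition arc0 (D : front) : 'I_(narcs D) := Ordinal (narcs_pos D).

Section Colorings.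
Variable D : front.

Lemma Hom_map (X Y : finType) (opX : X -> X -> X) (uX dX : X -> X)
    (opY : Y -> Y -> Y) (uY dY : Y -> Y) (f : X -> Y) phi :
  GLmorphism opX uX dX opY uY dY f -> phi \in Hom D opX uX dX ->
  [ffun k => f (phi k)] \in Hom D opY uY dY.
Proof.
case=> fop fu fd; rewrite !inE => /forallP Hphi; apply/forallP => k.
move: (Hphi k); rewrite /coloring_at !ffunE.
by case: (ftr k) => [||o []] /eqP E; apply/eqP; rewrite ?ffunE E.
Qed.

Lemma Hom_eq_arc0 (Y : finType) (op : Y -> Y -> Y) (u d : Y -> Y) phi1 phi2 :
  (forall y, injective (op^~ y)) ->
  phi1 \in Hom D op u d -> phi2 \in Hom D op u d ->
  (forall i x, op x (phi1 i) = op x (phi2 i)) ->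
  phi1 (arc0 D) = phi2 (arc0 D) -> phi1 = phi2.
Proof.
move=> op_injl; rewrite !inE => /forallP H1 /forallP H2 act12 E0.
have step k : phi1 k = phi2 k -> phi1 (ordS k) = phi2 (ordS k).
  move=> Ek; move: (H1 k) (H2 k); rewrite /coloring_at.
  case: (ftr k) => [||o []] /eqP F1 /eqP F2; rewrite ?F1 ?F2 ?Ek ?act12 //.
  by apply: (op_injl (phi1 o)); rewrite /= -F1 Ek F2 act12.
apply/ffunP => -[m lt_m]; elim: m lt_m => [|m IH] lt_m.
  by have -> : Ordinal lt_m = arc0 D by exact: val_inj.
have -> : Ordinal lt_m = ordS (Ordinal (ltnW lt_m)).
  by apply: val_inj; rewrite /= modn_small.
exact/step/IH.
Qed.

Variables (X : finType) (op : X -> X -> X) (u d : X -> X).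
Hypothesis GLX : is_GLrack op u d.
Local Notation Lift := (Lift D op u d).

Lemma Hom_bpi phi : phi \in Hom D op u d ->
  [ffun k => bpi op (phi k)] \in Hom D (top op) (tu op u) (td op d).
Proof. exact/Hom_map/bpi_GLmorphism. Qed.

Lemma Col_sum_Lift :
  Col D op u d = \sum_(psi in Hom D (top op) (tu op u) (td op d)) #|Lift psi|.
Proof.
rewrite /Col -sum1_card (partition_big _ _ Hom_bpi) /=.
by apply: eq_bigr => psi _; rewrite -sum1_card; apply: eq_bigl => phi; rewrite !inE.
Qed.

Lemma Lift_Hom psi phi : phi \in Lift psi -> phi \in Hom D op u d.
Proof. by rewrite inE => /andP[]. Qed.

Lemma Lift_bpi psi phi i : phi \in Lift psi -> bpi op (phi i) = psi i.
Proof. by rewrite inE => /andP[_ /eqP <-]; rewrite ffunE. Qed.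

Lemma Lift_iter psi phi k : phi \in Lift psi ->
  [ffun i => iter k (Delta op) (phi i)] \in Lift psi.
Proof.
move=> Lphi; have DkX := iter_Delta_GLmorphism GLX k.
rewrite inE (Hom_map DkX (Lift_Hom Lphi)).
by apply/eqP/ffunP => i; rewrite !ffunE (bpi_iter GLX) (Lift_bpi _ Lphi).
Qed.

Lemma Lift_arc0_inj psi :
  {in Lift psi &, injective (fun phi : {ffun _ -> X} => phi (arc0 D))}.
Proof.
move=> phi1 phi2 L1 L2.
apply: (Hom_eq_arc0 (op_injl GLX.1) (Lift_Hom L1) (Lift_Hom L2)) => i x.
by apply: (op_bpi_eq GLX); rewrite (Lift_bpi _ L1) (Lift_bpi _ L2).
Qed.

Lemma Lift_arc0_image psi phi0 : phi0 \in Lift psi ->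
  [set phi (arc0 D) | phi : {ffun _ -> X} in Lift psi] = block op (phi0 (arc0 D)).
Proof.
move=> L0; apply/setP => y; rewrite inE; apply/imsetP/idP.
  case=> phi Lphi ->; apply/(bpiP GLX).
  by rewrite (Lift_bpi _ L0) (Lift_bpi _ Lphi).
move=> conn_y; exists [ffun i => iter (findex (Delta op) (phi0 (arc0 D)) y)
                                     (Delta op) (phi0 i)].
  exact: Lift_iter.
by rewrite ffunE iter_findex.
Qed.

Lemma card_Lift c psi : is_block op c ->
  #|Lift psi| = 0 \/ #|Lift psi| = c.
Proof.
move=> blockX; have [->|[phi0 L0]] := set_0Vmem (Lift psi).
  by left; rewrite cards0.
right; rewrite -(card_in_imset (@Lift_arc0_inj psi)) (Lift_arc0_image L0).
by rewrite card_block blockX.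
Qed.

End Colorings.

Theorem theorem3p11 (D : front) (X : finType) (op : X -> X -> X) (u d : X -> X)
  (c : nat) (HGL : is_GLrack op u d) (Hblock : is_block op c) :
  (forall phi, phi \in Hom D op u d ->
     [ffun k => bpi op (phi k)] \in Hom D (top op) (tu op u) (td op d)) /\
  Col D op u d = \sum_(psi in Hom D (top op) (tu op u) (td op d)) #|Lift D op u d psi| /\
  (forall psi, psi \in Hom D (top op) (tu op u) (td op d) ->
     #|Lift D op u d psi| = 0 \/ #|Lift D op u d psi| = c).
Proof.
split; first exact: Hom_bpi.
split; first exact: Col_sum_Lift.
by move=> psi _; apply: card_Lift.
Qed.
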